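(* Let $\omega\in\Omega_+$ satisfy \[\liminf_{i\to\infty}\frac1i\sum_{y=-i}^{0}(2\omega(y,1)-1)>0.\] Then for all $x,k\in\mathbb Z$ with $k\ge x$, $E_{x,\omega}[D_{T_k}]=k-x$.
   Context: Cookie environments: $\Omega_+=([1/2,1]^{\mathbb N})^{\mathbb Z}$, $\omega=(\omega(z,i))_{z\in\mathbb Z,i\ge1}$. $P_{x,\omega}$ is the law of the nearest-neighbor process $(X_n)_{n\ge0}$ with $X_0=x$ which, on its $i$-th visit to site $z$, jumps to $z+1$ with probability $\omega(z,i)$ and to $z-1$ otherwise (independently of everything else given the history); $E_{x,\omega}$ its expectation. $T_k=\inf\{n\ge0:X_n=k\}$. For a site $z$ and time $n$, $D_n^z=\sum_{i=1}^{\#\{m<n: X_m=z\}}(2\omega(z,i)-1)$ (drift of cookies eaten at $z$ before time $n$); $D_n^+=\sum_{z\ge0}D_n^z$, $D_n^-=\sum_{z<0}D_n^z$, $D_n=D_n^++D_n^-$. *)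

From HB Require Import structures.
From mathcomp Require Import all_boot all_order all_algebra.
From mathcomp Require Import all_classical all_reals all_analysis.
Set Implicit Arguments. Unset Strict Implicit. Unset Printing Implicit Defensive.
Import Order.TTheory GRing.Theory Num.Theory.
Local Open Scope classical_set_scope.
Local Open Scope ring_scope.

Section Cookies.
Variable R : realType.

(* A cookie environment: omega z i = strength of the i-th cookie (i >= 1) at z. *)
Definition in_Omega_plus (omega : int -> nat -> R) : Prop :=
  forall (z : int) (i : nat), (1 <= i)%N -> 2^-1 <= omega z i <= 1.

(* History of the walk (X_0, ..., X_n), driven by the uniform variables u:
   at time m, if X_m = z is the i-th visit to z (counting time m), the walk
   jumps to z+1 iff u m < omega z i, and to z-1 otherwise. *)
Fixpoint walk_hist (omega : int -> nat -> R) (x : int) (u : nat -> R) (n : nat)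
  : seq int :=
  match n with
  | 0 => [:: x]
  | m.+1 =>
      let h := walk_hist omega x u m in
      let z := last x h in
      let i := count (pred1 z) h in
      rcons h (if u m < omega z i then z + 1 else z - 1)
  end.

Definition walk (omega : int -> nat -> R) (x : int) (u : nat -> R) (n : nat) : int :=
  last x (walk_hist omega x u n).

Definition nvisits (X : nat -> int) (z : int) (n : nat) : nat :=
  \sum_(0 <= m < n) (X m == z).

Definition Dsite (omega : int -> nat -> R) (X : nat -> int) (z : int) (n : nat) : R :=
  \sum_(1 <= i < (nvisits X z n).+1) (2 * omega z i - 1).

(* D_n = sum over all sites z of D_n^z; only the sites visited before time n
   contribute (D_n^z = 0 otherwise), so the sum is over them. *)
Definition Dtot (omega : int -> nat -> R) (X : nat -> int) (n : nat) : R :=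
  \sum_(z <- undup [seq X m | m <- iota 0 n]) Dsite omega X z n.

(* T_k = inf {n : X_n = k}, None if the set is empty (T_k = +infinity). *)
Definition hitting (X : nat -> int) (k : int) : option nat :=
  match pselect (exists n, X n == k) with
  | left h => Some (ex_minn h)
  | right _ => None
  end.

(* D_{T_k}, with the convention D_{T_k} = D_infinity = sup_n D_n (the
   nondecreasing limit) on {T_k = infinity}. *)
Definition D_at_hit (omega : int -> nat -> R) (X : nat -> int) (k : int) : \bar R :=
  match hitting X k with
  | Some n => (Dtot omega X n)%:E
  | None => ereal_sup (range (fun n => (Dtot omega X n)%:E))
  end.

End Cookies.

Definition iid_uniform (d : measure_display) (T : measurableType d) (R : realType)
  (P : probability T R) (U : nat -> T -> R) : Prop :=
  [/\ (forall n, measurable_fun setT (U n)),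
      (forall n (a : R), 0 <= a <= 1 -> P [set t | U n t <= a] = a%:E) &
      (forall (s : seq nat) (B : nat -> set R), uniq s ->
         (forall i, measurable (B i)) ->
         P (\bigcap_(i in [set` s]) (U i @^-1` B i)) =
         (\prod_(i <- s) P (U i @^-1` B i))%E)].

From HB Require Import structures.
From mathcomp Require Import all_boot all_order all_algebra.
From mathcomp Require Import all_classical all_reals all_analysis.
From mathcomp Require Import lra zify ring.
Import Order.TTheory GRing.Theory Num.Theory.
Local Open Scope classical_set_scope.
Local Open Scope ring_scope.
Set Implicit Arguments. Unset Strict Implicit. Unset Printing Implicit Defensive.

(* Drive the walk by the bits recording whether each step goes right: the
   expectation of a functional of the first n steps is then a finite sum over
   bit prefixes. Each step raises D by its drift 2 omega - 1 and, in
   expectation, raises X by the same amount, so D_{n /\ T_k} + (k - X_{n /\ T_k})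
   has constant expectation k - x, and by monotone convergence it suffices to
   show E[k - X_{n /\ T_k}] -> 0. The liminf hypothesis gives X_n >= -K - D_n / c,
   since reaching -i forces eating the first cookies at 0, ..., -i. So k - X_n
   is controlled by D_n, which is uniformly integrable (nondecreasing with
   bounded means), except on the event that the walk spends n steps in a
   bounded window left of k; that event has probability O(1/n) by the
   submartingale 2^-(k - X) - 1/4 sum_m 2^-(k - X_m). *)

(* Since every cookie strength lies in [1/2, 1], the driver values 0 and 2
   force a step to the right, resp. to the left: any walk is the walk driven
   by the bit sequence of its own steps. *)
Definition bits_driver {R : realType} (b : nat -> bool) : nat -> R :=
  fun m => if b m then 0 else 2.

Lemma iota0S n : iota 0 n.+1 = iota 0 n ++ [:: n].
Proof. by rewrite -addn1 iotaD. Qed.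

Section BitWalk.
Variables (R : realType) (omega : int -> nat -> R).
Hypothesis omega_plus : in_Omega_plus omega.
Variable x : int.

Definition next_cookie (h : seq int) : R :=
  omega (last x h) (count (pred1 (last x h)) h).

Definition step_bits (u : nat -> R) (m : nat) : bool :=
  u m < next_cookie (walk_hist omega x u m).

Lemma walk_histS u n : walk_hist omega x u n.+1 =
  rcons (walk_hist omega x u n)
   (if u n < next_cookie (walk_hist omega x u n)
    then walk omega x u n + 1 else walk omega x u n - 1).
Proof. by []. Qed.

Lemma walkS u n : walk omega x u n.+1 =
  if u n < next_cookie (walk_hist omega x u n)
  then walk omega x u n + 1 else walk omega x u n - 1.
Proof. by rewrite /walk walk_histS last_rcons. Qed.

Lemma walk_hist_map u n :
  walk_hist omega x u n = [seq walk omega x u m | m <- iota 0 n.+1].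
Proof.
elim: n => [//|n IH].
by rewrite walk_histS -walkS IH [iota 0 n.+2]iota0S map_cat cats1.
Qed.

Lemma next_cookie_range u n : 2^-1 <= next_cookie (walk_hist omega x u n) <= 1.
Proof.
apply: omega_plus; rewrite walk_hist_map -has_count has_pred1 /=.
exact: mem_last.
Qed.

Lemma bits_driver_ltE b m h : 2^-1 <= next_cookie h <= 1 ->
  (bits_driver b m < next_cookie h) = b m.
Proof.
move=> /andP[h1 h2]; rewrite /bits_driver; case: (b m).
  by apply: lt_le_trans h1; rewrite invr_gt0 ltr0n.
by apply/negbTE; rewrite -leNgt; apply: le_trans h2 _; rewrite ler1n.
Qed.

Lemma walk_hist_bits_prefix b b' n : (forall m, (m < n)%N -> b m = b' m) ->
  walk_hist omega x (bits_driver b) n = walk_hist omega x (bits_driver b') n.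
Proof.
elim: n => [//|n IH] H.
rewrite !walk_histS /walk IH; last by move=> m mn; apply: H; exact: ltnW.
by rewrite !bits_driver_ltE ?next_cookie_range // H.
Qed.

Lemma walk_bits_prefix b b' n : (forall m, (m < n)%N -> b m = b' m) ->
  walk omega x (bits_driver b) n = walk omega x (bits_driver b') n.
Proof. by move=> H; rewrite /walk (walk_hist_bits_prefix H). Qed.

Lemma walk_hist_step_bits u n :
  walk_hist omega x u n = walk_hist omega x (bits_driver (step_bits u)) n.
Proof.
elim: n => [//|n IH].
by rewrite !walk_histS /walk -IH bits_driver_ltE ?next_cookie_range.
Qed.

Lemma walk_step_bits u : walk omega x u = walk omega x (bits_driver (step_bits u)).
Proof. by apply: funext => n; rewrite /walk walk_hist_step_bits. Qed.

End BitWalk.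

Lemma cookie_drift_range (R : realType) (omega : int -> nat -> R) z i :
  in_Omega_plus omega -> (1 <= i)%N -> 0 <= 2 * omega z i - 1 <= 1.
Proof. by move=> omega_plus /(omega_plus z) /andP[h1 h2]; apply/andP; split; lra. Qed.

Lemma ler_sum_subset (R : realType) (s1 s2 : seq int) (g : int -> R) :
  uniq s1 -> uniq s2 -> {subset s1 <= s2} -> (forall z, 0 <= g z) ->
  \sum_(z <- s1) g z <= \sum_(z <- s2) g z.
Proof.
move=> u1 u2 sub g0.
rewrite [X in _ <= X](bigID (mem s1)) /=.
have -> : \sum_(i <- s2 | i \in s1) g i = \sum_(i <- s1) g i.
  rewrite -big_filter; apply: perm_big; apply: uniq_perm => //.
  - exact: filter_uniq.
  move=> z; rewrite mem_filter; case zs1: (z \in s1) => //=; exact: sub zs1.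
by rewrite lerDl sumr_ge0.
Qed.

Section Drift.
Variables (R : realType) (omega : int -> nat -> R).
Hypothesis omega_plus : in_Omega_plus omega.
Variable X : nat -> int.

Lemma nvisitsS z n : nvisits X z n.+1 = (nvisits X z n + (X n == z))%N.
Proof. by rewrite /nvisits big_nat_recr. Qed.

Lemma count_nvisits z n : count (pred1 z) [seq X m | m <- iota 0 n] = nvisits X z n.
Proof.
elim: n => [|n IH]; first by rewrite /nvisits big_geq.
by rewrite iota0S map_cat count_cat IH nvisitsS /= addn0.
Qed.

Lemma nvisits_gt0 z n : (0 < nvisits X z n)%N = (z \in [seq X m | m <- iota 0 n]).
Proof. by rewrite -count_nvisits -has_count has_pred1. Qed.

Lemma DsiteS z n : Dsite omega X z n.+1 =
  Dsite omega X z n + (X n == z)%:R * (2 * omega z (nvisits X z n).+1 - 1).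
Proof.
rewrite /Dsite nvisitsS; case: eqP => _.
  by rewrite addn1 big_nat_recr //= mul1r.
by rewrite addn0 mul0r addr0.
Qed.

Lemma Dtot_over n (s : seq int) : uniq s -> {subset [seq X m | m <- iota 0 n] <= s} ->
  Dtot omega X n = \sum_(z <- s) Dsite omega X z n.
Proof.
move=> us sub.
rewrite [RHS](bigID (mem (undup [seq X m | m <- iota 0 n]))) /=.
rewrite [X in _ + X]big1 ?addr0; last first.
  move=> z; rewrite mem_undup -nvisits_gt0 lt0n negbK => /eqP H.
  by rewrite /Dsite H big_geq.
rewrite -big_filter /Dtot; apply: perm_big; apply: uniq_perm.
- exact: undup_uniq.
- exact: filter_uniq.
move=> z; rewrite mem_filter; case zV: (z \in undup _) => //=.
by symmetry; apply: sub; move: zV; rewrite mem_undup.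
Qed.

Definition drift_step m : R := 2 * omega (X m) (nvisits X (X m) m).+1 - 1.

Lemma DtotS n : Dtot omega X n.+1 = Dtot omega X n + drift_step n.
Proof.
set s := undup [seq X m | m <- iota 0 n.+1].
have us : uniq s := undup_uniq _.
have sub : {subset [seq X m | m <- iota 0 n] <= s}.
  by move=> z; rewrite mem_undup iota0S map_cat mem_cat => ->.
have Xs : X n \in s by rewrite mem_undup iota0S map_cat mem_cat inE eqxx orbT.
rewrite {1}/Dtot -/s (Dtot_over us sub).
under eq_bigr do rewrite DsiteS.
rewrite big_split; congr (_ + _).
rewrite (bigD1_seq (X n)) //= eqxx mul1r big1 ?addr0 // => z /negbTE.
by rewrite eq_sym => ->; rewrite mul0r.
Qed.

Lemma Dtot0 : Dtot omega X 0 = 0.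
Proof. by rewrite /Dtot /= big_nil. Qed.

Lemma Dtot_sum n : Dtot omega X n = \sum_(0 <= m < n) drift_step m.
Proof.
elim: n => [|n IH]; first by rewrite Dtot0 big_geq.
by rewrite DtotS IH big_nat_recr.
Qed.

Lemma drift_step_range m : 0 <= drift_step m <= 1.
Proof. exact: cookie_drift_range. Qed.

Lemma Dtot_ge0 n : 0 <= Dtot omega X n.
Proof. by rewrite Dtot_sum sumr_ge0 // => m _; case/andP: (drift_step_range m). Qed.

Lemma Dtot_le n : Dtot omega X n <= n%:R.
Proof.
elim: n => [|n IH]; first by rewrite Dtot0.
by rewrite DtotS -natr1 lerD //; case/andP: (drift_step_range n).
Qed.

Lemma Dtot_mono m n : (m <= n)%N -> Dtot omega X m <= Dtot omega X n.
Proof.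
move/subnK <-; elim: (n - m)%N => [|j IH]; first by rewrite add0n.
rewrite addSn DtotS; apply: le_trans IH _.
by rewrite lerDl; case/andP: (drift_step_range (j + m)).
Qed.

Lemma Dsite_ge_first z n : z \in [seq X m | m <- iota 0 n] ->
  2 * omega z 1 - 1 <= Dsite omega X z n.
Proof.
rewrite -nvisits_gt0 => H; rewrite /Dsite big_ltn ?ltnS // lerDl.
rewrite big_nat_cond sumr_ge0 // => i /andP[/andP[i1 _] _].
by case/andP: (cookie_drift_range z omega_plus (ltnW i1)).
Qed.

End Drift.

Lemma Dtot_prefix (R : realType) (omega : int -> nat -> R) (X X' : nat -> int) n :
  (forall m, (m < n)%N -> X m = X' m) -> Dtot omega X n = Dtot omega X' n.
Proof.
move=> H; rewrite !Dtot_sum; apply: eq_big_nat => m /andP[_ mn].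
rewrite /drift_step H //; congr (2 * omega _ _.+1 - 1).
by apply: eq_big_nat => j /andP[_ jm]; rewrite H // (ltn_trans jm mn).
Qed.

(* [hit_trunc X k n] is the stopping time [minn T_k n]. *)
Definition hit_trunc (X : nat -> int) (k : int) (n : nat) : nat :=
  find (fun m => X m == k) (iota 0 n).

Section HitTrunc.
Variables (X : nat -> int) (k : int).

Lemma hit_trunc_le n : (hit_trunc X k n <= n)%N.
Proof. by have := find_size (fun m => X m == k) (iota 0 n); rewrite size_iota. Qed.

Lemma hit_trunc_hit n : (hit_trunc X k n < n)%N -> X (hit_trunc X k n) = k.
Proof.
move=> H; apply/eqP.
have hs : has (fun m => X m == k) (iota 0 n) by rewrite has_find size_iota.
by have := nth_find 0%N hs; rewrite -/(hit_trunc X k n) nth_iota.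
Qed.

Lemma hit_trunc_before n m : (m < hit_trunc X k n)%N -> X m != k.
Proof.
move=> H; have := before_find 0%N H; rewrite nth_iota ?add0n => [->//|].
exact: leq_trans H (hit_trunc_le n).
Qed.

Lemma hit_trunc_eq n : ~~ (hit_trunc X k n < n)%N -> hit_trunc X k n = n.
Proof. by move=> h; apply/eqP; rewrite eqn_leq hit_trunc_le leqNgt. Qed.

Lemma hit_truncS n : hit_trunc X k n.+1 =
  if (hit_trunc X k n < n)%N then hit_trunc X k n
  else if X n == k then n else n.+1.
Proof.
rewrite /hit_trunc iota0S find_cat has_find size_iota /=.
case: ifP => // _; case: (X n == k) => /=; lia.
Qed.

Lemma hit_trunc_mono m n : (m <= n)%N -> (hit_trunc X k m <= hit_trunc X k n)%N.
Proof.
move/subnK <-; elim: (n - m)%N => [|j IH]; first by rewrite add0n.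
apply: leq_trans IH _; rewrite addSn hit_truncS.
case: ifP => // /negbT /hit_trunc_eq ->.
by case: (X (j + m) == k).
Qed.

Lemma hit_trunc_full n : (forall m, (m < n)%N -> X m != k) -> hit_trunc X k n = n.
Proof.
elim: n => [//|n IH] H.
rewrite hit_truncS IH ?ltnn ?(negbTE (H n (ltnSn n))) // => m mn.
by apply: H; apply: ltnW.
Qed.

Lemma hit_trunc_first m n : X m = k -> (forall j, (j < m)%N -> X j != k) ->
  hit_trunc X k n = minn m n.
Proof.
move=> Xm bef; elim: n => [|n IH]; first by rewrite /hit_trunc /= minn0.
rewrite hit_truncS IH; case: (ltnP m n) => mn; first by rewrite mn; lia.
rewrite ltnn; have [nm|nm|->] := ltngtP n m; last by rewrite Xm eqxx; lia.
- by rewrite (negbTE (bef n nm)); lia.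
- lia.
Qed.

Lemma hit_trunc_prefix (X' : nat -> int) n : (forall m, (m < n)%N -> X m = X' m) ->
  hit_trunc X k n = hit_trunc X' k n.
Proof.
move=> H; apply: eq_in_find => m; rewrite mem_iota add0n => /andP[_ mn].
by rewrite /= H.
Qed.

End HitTrunc.

Section NearestNeighbour.
Variables (X : nat -> int) (x : int).
Hypothesis X0 : X 0%N = x.
Hypothesis nn : forall n, X n.+1 = X n + 1 \/ X n.+1 = X n - 1.

Lemma nn_visits_between n z : X n < z -> z <= x -> z \in [seq X m | m <- iota 0 n].
Proof.
elim: n => [|n IH] H1 H2; first by move: H1; rewrite X0; lia.
rewrite iota0S map_cat mem_cat; case: (ltP (X n) z) => h; first by rewrite IH.
apply/orP; right; rewrite inE; apply/eqP.
by case: (nn n) => h'; move: H1; rewrite h'; lia.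
Qed.

Lemma nn_le_before_hit k n : x <= k -> (forall m, (m < n)%N -> X m != k) -> X n <= k.
Proof.
move=> xk; elim: n => [|n IH] H; first by rewrite X0.
have h1 : X n <= k by apply: IH => m mn; apply: H; apply: ltnW.
have h2 : X n != k by apply: H.
by case: (nn n) => ->; lia.
Qed.

Lemma nn_hit_trunc_le k n : x <= k -> X (hit_trunc X k n) <= k.
Proof.
move=> xk; case: (ltnP (hit_trunc X k n) n) => h; first by rewrite hit_trunc_hit.
have e : hit_trunc X k n = n by rewrite hit_trunc_eq // -leqNgt.
by rewrite e; apply: nn_le_before_hit => // m; rewrite -{1}e; exact: hit_trunc_before.
Qed.

End NearestNeighbour.

(* To stand at -i-1 the walk has eaten the first cookie at each of the sites
   0, -1, ..., -i it has crossed; those left of x are visited at least once, and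
   the cookies at the at most |x| sites in between contribute at most 1 each. *)
Section LeftBound.
Variables (R : realType) (omega : int -> nat -> R).
Hypothesis omega_plus : in_Omega_plus omega.
Variables (X : nat -> int) (x : int).
Hypothesis X0 : X 0%N = x.
Hypothesis nn : forall n, X n.+1 = X n + 1 \/ X n.+1 = X n - 1.
Variables (c : R) (I : nat).
Hypothesis c_gt0 : 0 < c.
Hypothesis first_cookies_ge : forall i, (I <= i)%N ->
  c * i%:R <= \sum_(0 <= j < i.+1) (2 * omega (- (j%:Z)) 1%N - 1).

Definition left_margin : R := I%:R + 2 + (absz x)%:R + (absz x)%:R / c.

Lemma first_cookies_le_Dtot n (i : nat) : X n = - (i%:Z) - 1 ->
  \sum_(0 <= j < i.+1) (2 * omega (- (j%:Z)) 1%N - 1) <= (absz x)%:R + Dtot omega X n.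
Proof.
move=> Xn; pose a := minn (absz x) i.+1.
rewrite (@big_cat_nat _ _ _ a) //= ?geq_minr //; apply: lerD.
  apply: le_trans (_ : \sum_(0 <= j < a) (1 : R) <= _).
    by apply: ler_sum => j _; case/andP: (cookie_drift_range (- (j%:Z)) omega_plus (leqnn 1)).
  by rewrite sumr_const_nat subn0 ler_nat geq_minl.
rewrite -(big_map (fun j : nat => - (j%:Z)) xpredT (fun z => 2 * omega z 1%N - 1)).
set S := map _ _.
have visited z : z \in S -> z \in [seq X m | m <- iota 0 n].
  move=> /mapP [j]; rewrite mem_index_iota => /andP[aj ji] ->; rewrite /a in aj.
  by apply: (nn_visits_between X0 nn); rewrite ?Xn; lia.
apply: le_trans (_ : \sum_(z <- S) Dsite omega X z n <= _).
  rewrite big_seq_cond [X in _ <= X]big_seq_cond; apply: ler_sum => z /andP[zS _].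
  exact/Dsite_ge_first/visited.
rewrite [X in _ <= X]/Dtot; apply: ler_sum_subset.
- rewrite map_inj_uniq ?iota_uniq // => j1 j2 /eqP; rewrite eqr_opp => /eqP [] //.
- exact: undup_uniq.
- by move=> z; rewrite mem_undup; apply: visited.
- move=> z; rewrite /Dsite big_nat_cond sumr_ge0 // => j /andP[/andP[j1 _] _].
  by case/andP: (cookie_drift_range z omega_plus j1).
Qed.

Lemma walk_ge_left_margin n : - (left_margin + Dtot omega X n / c) <= (X n)%:~R.
Proof.
have D0 : 0 <= Dtot omega X n / c by rewrite divr_ge0 ?Dtot_ge0 // ltW.
have ax0 : 0 <= (absz x)%:R / c by rewrite divr_ge0 ?ler0n // ltW.
have xax : - ((absz x)%:R : R) <= x%:~R.
  by rewrite -[(absz x)%:R]/(((absz x)%:Z)%:~R : R) -intrN ler_int; lia.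
have I0 := ler0n R I; have ax_ge0 := ler0n R (absz x); rewrite /left_margin.
have [xXn|Xnx] := leP x (X n).
  have : (x%:~R : R) <= (X n)%:~R by rewrite ler_int.
  lra.
have [IXn|XnI] := leP (- (I%:Z) - 1) (X n).
  have : ((- (I%:Z) - 1)%:~R : R) <= (X n)%:~R by rewrite ler_int.
  rewrite intrB intrN; lra.
have [i Xn] : exists i : nat, X n = - (i%:Z) - 1 by exists (absz (X n + 1)); lia.
have Ii : (I <= i)%N by lia.
have h := le_trans (first_cookies_ge Ii) (first_cookies_le_Dtot Xn).
have : i%:R <= (absz x)%:R / c + Dtot omega X n / c.
  by rewrite -mulrDl ler_pdivlMr // mulrC.
rewrite Xn intrB intrN; lra.
Qed.

End LeftBound.

Definition set_bit (b : nat -> bool) (n : nat) (v : bool) : nat -> bool :=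
  fun m => if m == n then v else b m.

Lemma set_bit_lt b n v m : (m < n)%N -> set_bit b n v m = b m.
Proof. by rewrite /set_bit => h; rewrite (ltn_eqF h). Qed.

Lemma set_bit_eq b n v : set_bit b n v n = v.
Proof. by rewrite /set_bit eqxx. Qed.

Definition reads_prefix {A : Type} (n : nat) (F : (nat -> bool) -> A) :=
  forall b b', (forall m, (m < n)%N -> b m = b' m) -> F b = F b'.

Lemma reads_prefix_set_bit {A : Type} n (F : (nat -> bool) -> A) b v :
  reads_prefix n F -> F (set_bit b n v) = F b.
Proof. by move=> H; apply: H => m; apply: set_bit_lt. Qed.

Lemma reads_prefix_le {A : Type} n j (F : (nat -> bool) -> A) :
  (n <= j)%N -> reads_prefix n F -> reads_prefix j F.
Proof. by move=> nj H b b' E; apply: H => m mn; apply: E; exact: leq_trans mn nj. Qed.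

Section PrefixSum.
Variable R : realType.

(* The sum of [F] over the [2 ^ n] bit sequences vanishing from index [n] on. *)
Fixpoint prefix_sum (n : nat) (F : (nat -> bool) -> R) : R :=
  if n is n'.+1 then prefix_sum n' (fun b => F (set_bit b n' true) + F (set_bit b n' false))
  else F (fun _ => false).

Lemma eq_prefix_sum n F G : (forall b, F b = G b) -> prefix_sum n F = prefix_sum n G.
Proof. by move=> H; congr (prefix_sum n _); apply: funext. Qed.

Lemma prefix_sumD n F G :
  prefix_sum n (fun b => F b + G b) = prefix_sum n F + prefix_sum n G.
Proof. by elim: n F G => [//|n IH] F G /=; rewrite -IH; apply: eq_prefix_sum => b; ring. Qed.

Lemma prefix_sumZ n a F : prefix_sum n (fun b => a * F b) = a * prefix_sum n F.
Proof. by elim: n F => [//|n IH] F /=; rewrite -IH; apply: eq_prefix_sum => b; ring. Qed.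

Lemma ler_prefix_sum n F G : (forall b, F b <= G b) -> prefix_sum n F <= prefix_sum n G.
Proof.
elim: n F G => [|n IH] F G H /=; first exact: H.
by apply: IH => b; apply: lerD.
Qed.

Fixpoint agree_prefix n (b a : nat -> bool) : bool :=
  if n is n'.+1 then agree_prefix n' b a && (b n' == a n') else true.

Lemma agree_prefixP n b a : agree_prefix n b a <-> (forall m, (m < n)%N -> b m = a m).
Proof.
elim: n => [|n IH] /=; first by split.
split.
  move=> /andP[/IH H /eqP e] m; rewrite ltnS leq_eqVlt => /orP[/eqP ->//|].
  exact: H.
move=> H; apply/andP; split; last by apply/eqP; apply: H.
by apply/IH => m mn; apply: H; apply: ltnW.
Qed.

Lemma agree_prefix_reads n a : reads_prefix n (fun b => agree_prefix n b a).
Proof.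
move=> b b' H; apply/idP/idP => /agree_prefixP h; apply/agree_prefixP => m mn.
  by rewrite -H ?h.
by rewrite H ?h.
Qed.

Lemma prefix_sum_indicator n (G : (nat -> bool) -> R) a : reads_prefix n G ->
  prefix_sum n (fun b => G b * (agree_prefix n b a)%:R) = G a.
Proof.
elim: n G => [|n IH] G HG /=; first by rewrite mulr1; apply: HG.
rewrite (@eq_prefix_sum n _ (fun b => G (set_bit b n (a n)) * (agree_prefix n b a)%:R)).
  rewrite IH; first by apply: HG => m _; rewrite /set_bit; case: eqP => // ->.
  move=> b b' H; apply: HG => m; rewrite ltnS leq_eqVlt => /orP[/eqP ->|mn].
    by rewrite !set_bit_eq.
  by rewrite !set_bit_lt // H.
move=> b; rewrite !set_bit_eq !(reads_prefix_set_bit b _ (@agree_prefix_reads n a)).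
by case: (a n); case: (agree_prefix n b a); rewrite /= ?mulr0 ?mulr1 ?addr0 ?add0r.
Qed.

End PrefixSum.

Section PrefixExpectation.
Variables (R : realType) (omega : int -> nat -> R).
Hypothesis omega_plus : in_Omega_plus omega.
Variable x : int.

Definition bwalk (b : nat -> bool) : nat -> int := walk omega x (bits_driver b).

Definition up_prob n b : R := next_cookie omega x (walk_hist omega x (bits_driver b) n).

Definition step_weight n b (v : bool) : R := if v then up_prob n b else 1 - up_prob n b.

Definition prefix_weight n b : R := \prod_(0 <= m < n) step_weight m b (b m).

Definition Eprefix n (F : (nat -> bool) -> R) : R :=
  prefix_sum n (fun b => prefix_weight n b * F b).

Lemma up_prob_range n b : 2^-1 <= up_prob n b <= 1.
Proof. exact: next_cookie_range. Qed.

Lemma up_prob_reads n : reads_prefix n (up_prob n).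
Proof. by move=> b b' H; rewrite /up_prob (walk_hist_bits_prefix omega_plus x H). Qed.

Lemma step_weight_ge0 n b v : 0 <= step_weight n b v.
Proof. by have /andP[h1 h2] := up_prob_range n b; rewrite /step_weight; case: v; lra. Qed.

Lemma prefix_weight_reads n : reads_prefix n (prefix_weight n).
Proof.
move=> b b' H; apply: eq_big_nat => m /andP[_ mn].
rewrite /step_weight H // (@up_prob_reads m b b') // => j jm.
by apply: H; exact: ltn_trans jm mn.
Qed.

Lemma prefix_weightS n b v :
  prefix_weight n.+1 (set_bit b n v) = prefix_weight n b * step_weight n b v.
Proof.
rewrite /prefix_weight big_nat_recr //= -/(prefix_weight n _).
rewrite (reads_prefix_set_bit _ _ (@prefix_weight_reads n)) set_bit_eq /step_weight.
by rewrite (reads_prefix_set_bit _ _ (@up_prob_reads n)).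
Qed.

Lemma eq_Eprefix n F G : (forall b, F b = G b) -> Eprefix n F = Eprefix n G.
Proof. by move=> H; apply: eq_prefix_sum => b; rewrite H. Qed.

Lemma EprefixS n F : Eprefix n.+1 F = Eprefix n (fun b =>
  up_prob n b * F (set_bit b n true) + (1 - up_prob n b) * F (set_bit b n false)).
Proof. by rewrite /Eprefix /=; apply: eq_prefix_sum => b; rewrite !prefix_weightS /step_weight; ring. Qed.

Lemma EprefixD n F G : Eprefix n (fun b => F b + G b) = Eprefix n F + Eprefix n G.
Proof. by rewrite /Eprefix -prefix_sumD; apply: eq_prefix_sum => b; ring. Qed.

Lemma EprefixZ n a F : Eprefix n (fun b => a * F b) = a * Eprefix n F.
Proof. by rewrite /Eprefix -prefix_sumZ; apply: eq_prefix_sum => b; ring. Qed.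

Lemma EprefixB n F G : Eprefix n (fun b => F b - G b) = Eprefix n F - Eprefix n G.
Proof.
rewrite (@eq_Eprefix n _ (fun b => F b + (-1) * G b)) => [|b]; last by ring.
by rewrite EprefixD EprefixZ mulN1r.
Qed.

Lemma ler_Eprefix n F G : (forall b, F b <= G b) -> Eprefix n F <= Eprefix n G.
Proof.
move=> H; apply: ler_prefix_sum => b; apply: ler_wpM2l => //.
by apply: prodr_ge0 => m _; apply: step_weight_ge0.
Qed.

Lemma Eprefix_cst n a : Eprefix n (fun _ => a) = a.
Proof.
elim: n => [|n IH]; first by rewrite /Eprefix /= /prefix_weight big_geq // mul1r.
by rewrite EprefixS -[RHS]IH; apply: eq_Eprefix => b; ring.
Qed.

Lemma Eprefix_ge0 n F : (forall b, 0 <= F b) -> 0 <= Eprefix n F.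
Proof. by move=> H; rewrite -(Eprefix_cst n 0); exact: ler_Eprefix. Qed.

Lemma Eprefix_reads n j F : (n <= j)%N -> reads_prefix n F -> Eprefix j F = Eprefix n F.
Proof.
move/subnK <-; elim: (j - n)%N => [|i IH] H; first by rewrite add0n.
rewrite addSn EprefixS -[RHS]IH //; apply: eq_Eprefix => b.
rewrite !(reads_prefix_set_bit _ _ (reads_prefix_le (leq_addl i n) H)); ring.
Qed.

Lemma bwalk_reads m n : (m <= n)%N -> reads_prefix n (fun b => bwalk b m).
Proof.
move=> mn b b' H; apply: (walk_bits_prefix omega_plus) => j jm.
by apply: H; exact: leq_trans jm mn.
Qed.

Lemma bwalk_set_bit b n v m : (m <= n)%N -> bwalk (set_bit b n v) m = bwalk b m.
Proof. by move=> mn; apply: (bwalk_reads mn) => j jn; apply: set_bit_lt. Qed.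

Lemma bwalkS b n : bwalk b n.+1 = if b n then bwalk b n + 1 else bwalk b n - 1.
Proof. by rewrite /bwalk walkS bits_driver_ltE //; exact: next_cookie_range. Qed.

Lemma bwalk0 b : bwalk b 0%N = x.
Proof. by []. Qed.

Lemma bwalk_nn b n : bwalk b n.+1 = bwalk b n + 1 \/ bwalk b n.+1 = bwalk b n - 1.
Proof. by rewrite bwalkS; case: (b n); [left|right]. Qed.

Lemma bwalk_set_bitS b n v :
  bwalk (set_bit b n v) n.+1 = if v then bwalk b n + 1 else bwalk b n - 1.
Proof. by rewrite bwalkS set_bit_eq bwalk_set_bit. Qed.

Lemma up_prob_drift_step n b : 2 * up_prob n b - 1 = drift_step omega (bwalk b) n.
Proof.
rewrite /up_prob /next_cookie /drift_step walk_hist_map -/(bwalk b).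
have -> : last x [seq bwalk b m | m <- iota 0 n.+1] = bwalk b n.
  by rewrite iota0S map_cat cats1 last_rcons.
by rewrite count_nvisits nvisitsS eqxx addn1.
Qed.

Section Stopping.
Variable k : int.
Hypothesis x_le_k : x <= k.

Definition tau n b := hit_trunc (bwalk b) k n.
Definition stopped (F : nat -> (nat -> bool) -> R) n b := F (tau n b) b.
Definition running n b := ~~ (tau n b < n)%N && (bwalk b n != k).

Lemma tau_le n b : (tau n b <= n)%N.
Proof. exact: hit_trunc_le. Qed.

Lemma tau_eq n b : ~~ (tau n b < n)%N -> tau n b = n.
Proof. exact: hit_trunc_eq. Qed.

Lemma tau_reads n : reads_prefix n (tau n).
Proof. by move=> b b' H; apply: hit_trunc_prefix => m mn; exact: (bwalk_reads (ltnW mn) H). Qed.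

Lemma tauS n b v : tau n.+1 (set_bit b n v) =
  if (tau n b < n)%N || (bwalk b n == k) then tau n b else n.+1.
Proof.
rewrite /tau hit_truncS -/(tau n _) (reads_prefix_set_bit _ _ (@tau_reads n)).
rewrite bwalk_set_bit //; case: (ltnP (tau n b) n) => //= h.
by case: (bwalk b n == k) => //; rewrite hit_trunc_eq // -leqNgt.
Qed.

Lemma running_before n b m : ~~ (tau n b < n)%N -> (m < n)%N -> bwalk b m != k.
Proof. by move=> /tau_eq h mn; apply: (hit_trunc_before (n := n)); rewrite -/(tau n b) h. Qed.

Lemma running_lt n b : running n b -> bwalk b n < k.
Proof.
move=> /andP[h1 h2]; rewrite lt_neqAle h2 /=.
apply: (nn_le_before_hit (bwalk0 b) (bwalk_nn b)) => // m.
exact: running_before.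
Qed.

Lemma stopped_reads F n : (forall t, reads_prefix t (F t)) -> reads_prefix n (stopped F n).
Proof.
move=> dF b b' H; rewrite /stopped (tau_reads H); apply: dF => m mt; apply: H.
exact: leq_trans mt (tau_le n b').
Qed.

Lemma Eprefix_stoppedS F n : (forall t, reads_prefix t (F t)) ->
  Eprefix n.+1 (stopped F n.+1) = Eprefix n (fun b =>
    if running n b then up_prob n b * F n.+1 (set_bit b n true) +
                        (1 - up_prob n b) * F n.+1 (set_bit b n false)
    else stopped F n b).
Proof.
move=> dF; rewrite EprefixS; apply: eq_Eprefix => b.
rewrite /stopped !tauS /running -negb_or; case: ifP => //= _.
rewrite !(reads_prefix_set_bit _ _ (reads_prefix_le (tau_le n b) (dF _))); ring.
Qed.

Definition compensated t b : R := Dtot omega (bwalk b) t + (k - bwalk b t)%:~R.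

Lemma compensated_reads t : reads_prefix t (compensated t).
Proof.
move=> b b' H; rewrite /compensated (bwalk_reads (leqnn t) H).
by rewrite (@Dtot_prefix _ _ _ (bwalk b')) // => m mt; apply: (bwalk_reads (ltnW mt) H).
Qed.

Lemma compensated_step n b : compensated n b =
  up_prob n b * compensated n.+1 (set_bit b n true) +
  (1 - up_prob n b) * compensated n.+1 (set_bit b n false).
Proof.
have D_set_bit v m : (m <= n)%N ->
    Dtot omega (bwalk (set_bit b n v)) m = Dtot omega (bwalk b) m.
  by move=> mn; apply: Dtot_prefix => j jm; rewrite bwalk_set_bit // ltnW // (leq_trans jm).
rewrite /compensated !DtotS !bwalk_set_bitS.
have step v : drift_step omega (bwalk (set_bit b n v)) n = 2 * up_prob n b - 1.
  by rewrite -up_prob_drift_step (reads_prefix_set_bit _ _ (@up_prob_reads n)).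
rewrite !step !D_set_bit // !intrB !intrD; ring.
Qed.

Lemma Eprefix_compensated n : Eprefix n (stopped compensated n) = (k - x)%:~R.
Proof.
elim: n => [|n IH].
  rewrite /Eprefix /= /prefix_weight big_geq // mul1r /stopped /tau /hit_trunc /=.
  by rewrite /compensated Dtot0 add0r.
rewrite Eprefix_stoppedS; last exact: compensated_reads.
rewrite -IH; apply: eq_Eprefix => b; case: ifP => // /andP[h _].
by rewrite /stopped (tau_eq h) (compensated_step n b).
Qed.

Definition proximity (y : int) : R := (2^-1 : R) ^+ absz (k - y).

Lemma proximity_ge0 y : 0 <= proximity y.
Proof. by rewrite /proximity exprn_ge0 // invr_ge0 ler0n. Qed.

Lemma proximity_le1 y : proximity y <= 1.
Proof. by rewrite /proximity exprn_ile1 // ?invr_ge0 ?ler0n // invf_le1 // ler1n. Qed.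

Lemma proximity_ge y (N : nat) : y <= k -> ((k - y)%:~R : R) <= N%:R ->
  (2^-1 : R) ^+ N <= proximity y.
Proof.
move=> yk kyN; rewrite /proximity ler_wiXn2l // ?invf_le1 ?ler1n //.
by rewrite -(ler_nat R) natr_absz ger0_norm ?subr_ge0.
Qed.

Lemma proximity_right y : y < k -> proximity y = 2^-1 * proximity (y + 1).
Proof. by move=> yk; rewrite /proximity -exprS; congr (_ ^+ _); lia. Qed.

Lemma proximity_left y : y < k -> proximity (y - 1) = 2^-1 * proximity y.
Proof. by move=> yk; rewrite /proximity -exprS; congr (_ ^+ _); lia. Qed.

(* Left of [k] a right step doubles the proximity and a left step halves it,
   so with a right step of probability at least 1/2 the expected proximity
   grows by a factor at least 5/4: the potential is a submartingale. *)
Definition occupation_potential t b : R :=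
  proximity (bwalk b t) - 4^-1 * \sum_(0 <= m < t) proximity (bwalk b m).

Lemma occupation_potential_reads t : reads_prefix t (occupation_potential t).
Proof.
move=> b b' H; rewrite /occupation_potential (bwalk_reads (leqnn t) H).
by congr (_ - 4^-1 * _); apply: eq_big_nat => m /andP[_ mt]; rewrite (bwalk_reads (ltnW mt) H).
Qed.

Lemma occupation_potential_step n b : running n b ->
  occupation_potential n b <=
  up_prob n b * occupation_potential n.+1 (set_bit b n true) +
  (1 - up_prob n b) * occupation_potential n.+1 (set_bit b n false).
Proof.
move=> /running_lt lt_k; rewrite /occupation_potential !big_nat_recr //=.
rewrite !bwalk_set_bitS !bwalk_set_bit //.
have past v : \sum_(0 <= m < n) proximity (bwalk (set_bit b n v) m) =
              \sum_(0 <= m < n) proximity (bwalk b m).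
  by apply: eq_big_nat => m /andP[_ mn]; rewrite bwalk_set_bit // ltnW.
rewrite !past (proximity_left lt_k) [proximity (bwalk b n)](proximity_right lt_k).
have /andP[p1 p2] := up_prob_range n b; have p0 := proximity_ge0 (bwalk b n + 1).
have : 0 <= (up_prob n b - 2^-1) * proximity (bwalk b n + 1) by apply: mulr_ge0; lra.
nra.
Qed.

Lemma Eprefix_occupation_potential_ge0 n : 0 <= Eprefix n (stopped occupation_potential n).
Proof.
elim: n => [|n IH].
  rewrite /Eprefix /= /prefix_weight /stopped /occupation_potential !big_geq //.
  by rewrite mul1r mulr0 subr0 proximity_ge0.
apply: le_trans IH _; rewrite Eprefix_stoppedS; last exact: occupation_potential_reads.
apply: ler_Eprefix => b; case: ifP => // run; have /andP[h _] := run.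
by rewrite /stopped (tau_eq h); apply: occupation_potential_step.
Qed.

Lemma Eprefix_occupation_le n :
  Eprefix n (fun b => \sum_(0 <= m < tau n b) proximity (bwalk b m)) <= 4.
Proof.
rewrite (@eq_Eprefix n _ (fun b => 4 * proximity (bwalk b (tau n b)) -
                                   4 * stopped occupation_potential n b)); last first.
  by move=> b; rewrite /stopped /occupation_potential; field.
rewrite EprefixB !EprefixZ.
have : Eprefix n (fun b => proximity (bwalk b (tau n b))) <= 1.
  by rewrite -[X in _ <= X](Eprefix_cst n 1); apply: ler_Eprefix => b; exact: proximity_le1.
have := Eprefix_occupation_potential_ge0 n; lra.
Qed.

Lemma bwalk_tau_le n b : bwalk b (tau n b) <= k.
Proof. exact: (nn_hit_trunc_le (bwalk0 b) (bwalk_nn b)). Qed.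

Definition Dstop n b : R := Dtot omega (bwalk b) (tau n b).

Definition mean_D n : R := Eprefix n (Dstop n).

Definition mean_gap n : R := Eprefix n (fun b => (k - bwalk b (tau n b))%:~R).

Lemma Dstop_ge0 n b : 0 <= Dstop n b.
Proof. exact: Dtot_ge0. Qed.

Lemma Dstop_le n b : Dstop n b <= n%:R.
Proof. by apply: le_trans (Dtot_le omega_plus _ _) _; rewrite ler_nat tau_le. Qed.

Lemma Dstop_mono m n b : (m <= n)%N -> Dstop m b <= Dstop n b.
Proof. by move=> mn; apply: Dtot_mono => //; apply: hit_trunc_mono. Qed.

Lemma Dstop_reads n : reads_prefix n (Dstop n).
Proof.
apply: (stopped_reads (F := fun t b => Dtot omega (bwalk b) t)) => t b b' H.
by apply: Dtot_prefix => m mt; apply: (bwalk_reads (ltnW mt) H).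
Qed.

Lemma mean_D_gap n : mean_D n + mean_gap n = (k - x)%:~R.
Proof. by rewrite -EprefixD -(Eprefix_compensated n). Qed.

Lemma mean_gap_ge0 n : 0 <= mean_gap n.
Proof. by apply: Eprefix_ge0 => b; rewrite -(mulr0z (1:R)) ler_int subr_ge0 bwalk_tau_le. Qed.

Lemma mean_D_le n : mean_D n <= (k - x)%:~R.
Proof. by rewrite -(mean_D_gap n) lerDl mean_gap_ge0. Qed.

Lemma mean_D_mono m n : (m <= n)%N -> mean_D m <= mean_D n.
Proof.
move=> mn; rewrite /mean_D -(Eprefix_reads mn (@Dstop_reads m)).
by apply: ler_Eprefix => b; apply: Dstop_mono.
Qed.

Lemma Dstop_tail_le (M : R) n0 n b : 0 < M -> (n0 <= n)%N ->
  Dstop n b * ((M < Dstop n b)%R)%:R <= (Dstop n b - Dstop n0 b) + n0%:R / M * Dstop n b.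
Proof.
move=> M0 n0n; have := Dstop_mono b n0n; have := Dstop_le n0 b.
have q0 : 0 <= n0%:R / M * Dstop n b by rewrite mulr_ge0 ?divr_ge0 ?Dstop_ge0 // ltW.
case: ltP => [MD|_]; rewrite ?mulr0 ?mulr1; last lra.
have : n0%:R <= n0%:R / M * Dstop n b by rewrite mulrAC ler_pdivlMr // ler_wpM2l // ltW.
lra.
Qed.

(* Uniform integrability of the nondecreasing family [Dstop n], whose means
   converge since they are bounded by [k - x]. *)
Lemma Eprefix_Dstop_tail (n0 : nat) (M eps : R) : 0 < M ->
  (forall n, (n0 <= n)%N -> mean_D n - mean_D n0 <= eps) ->
  forall n, (n0 <= n)%N ->
  Eprefix n (fun b => Dstop n b * ((M < Dstop n b)%R)%:R) <= eps + n0%:R / M * (k - x)%:~R.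
Proof.
move=> M0 mean_D_close n n0n.
apply: le_trans (ler_Eprefix n (fun b => @Dstop_tail_le M n0 n b M0 n0n)) _.
rewrite EprefixD EprefixB EprefixZ (Eprefix_reads n0n (@Dstop_reads n0)) -/(mean_D n).
have : n0%:R / M * mean_D n <= n0%:R / M * (k - x)%:~R.
  by rewrite ler_wpM2l ?mean_D_le // divr_ge0 // ltW.
have := mean_D_close n n0n; rewrite /mean_D; lra.
Qed.

Lemma mean_D_settles eps : 0 < eps ->
  exists n0, forall n, (n0 <= n)%N -> mean_D n - mean_D n0 <= eps.
Proof.
move=> eps0; have hs : has_sup (range mean_D).
  split; first by exists (mean_D 0); exists 0%N.
  by exists (k - x)%:~R => _ [n _ <-]; exact: mean_D_le.
have [_ [n0 _ <-] hn0] := sup_adherent eps0 hs.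
exists n0 => n _; have : mean_D n <= sup (range mean_D) by apply: sup_upper_bound => //; exists n.
lra.
Qed.

Section Liminf.
Variables (c : R) (I : nat).
Hypothesis c_gt0 : 0 < c.
Hypothesis first_cookies_ge : forall i, (I <= i)%N ->
  c * i%:R <= \sum_(0 <= j < i.+1) (2 * omega (- (j%:Z)) 1%N - 1).

Let gap_margin : R := k%:~R + left_margin x c I.

Lemma gap_margin_ge0 : 0 <= gap_margin.
Proof.
have : (x%:~R : R) <= k%:~R by rewrite ler_int.
have : - ((absz x)%:R : R) <= x%:~R.
  by rewrite -[(absz x)%:R]/(((absz x)%:Z)%:~R : R) -intrN ler_int; lia.
have : 0 <= ((absz x)%:R : R) / c by rewrite divr_ge0 // ltW.
have := ler0n R I; rewrite /gap_margin /left_margin; lra.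
Qed.

Lemma gap_le_Dtot n b : ((k - bwalk b n)%:~R : R) <= gap_margin + Dtot omega (bwalk b) n / c.
Proof.
have := walk_ge_left_margin omega_plus (bwalk0 b) (bwalk_nn b) c_gt0 first_cookies_ge n.
by rewrite intrB /gap_margin; lra.
Qed.

Definition stuck (M : R) n b : R := (~~ (tau n b < n)%N && (Dstop n b <= M)%R)%:R.

Lemma gap_le_split (M : R) n b : gap_margin <= M ->
  ((k - bwalk b (tau n b))%:~R : R) <=
  (gap_margin + M / c) * stuck M n b + (1 + 1 / c) * (Dstop n b * ((M < Dstop n b)%R)%:R).
Proof.
move=> KM; have K0 := gap_margin_ge0.
have D0 := Dstop_ge0 n b; have Dc0 : 0 <= Dstop n b / c by rewrite divr_ge0 // ltW.
have Mc0 : 0 <= M / c by apply: divr_ge0; [lra | exact: ltW].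
rewrite /stuck; case: (ltnP (tau n b) n) => /= h.
  rewrite hit_trunc_hit // subrr mulr0 add0r mulr_ge0 // ?mulr_ge0 //.
  by rewrite addr_ge0 // divr_ge0 // ltW.
have nh : ~~ (tau n b < n)%N by rewrite -leqNgt.
have hgap : ((k - bwalk b n)%:~R : R) <= gap_margin + Dstop n b / c.
  by rewrite /Dstop (tau_eq nh); exact: gap_le_Dtot.
rewrite (tau_eq nh); case: leP => hD /=.
  have : Dstop n b / c <= M / c by rewrite ler_wpM2r // invr_ge0 ltW.
  by rewrite mulr1 mulr0 mulr0; lra.
have : Dstop n b / c = 1 / c * Dstop n b by rewrite mulrC div1r.
by rewrite mulr0 mulr1 mulrDl mul1r; lra.
Qed.

Lemma Eprefix_stuck_le (M : R) (N n : nat) : gap_margin + M / c <= N%:R ->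
  n%:R * (2^-1) ^+ N * Eprefix n (stuck M n) <= 4.
Proof.
move=> KN; apply: le_trans (Eprefix_occupation_le n); rewrite -EprefixZ.
apply: ler_Eprefix => b; rewrite /stuck.
have occ0 : 0 <= \sum_(0 <= m < tau n b) proximity (bwalk b m).
  by apply: sumr_ge0 => m _; exact: proximity_ge0.
case: (ltnP (tau n b) n) => [_|h]; first by rewrite /= mulr0n mulr0.
have nh : ~~ (tau n b < n)%N by rewrite -leqNgt.
case: (leP (Dstop n b) M) => hD /=; last by rewrite mulr0.
rewrite mulr1 (tau_eq nh).
have -> : n%:R * (2^-1 : R) ^+ N = \sum_(0 <= m < n) (2^-1 : R) ^+ N.
  by rewrite sumr_const_nat subn0 mulr_natl.
apply: ler_sum_nat => m /andP[_ mn]; apply: proximity_ge.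
  apply: (nn_le_before_hit (bwalk0 b) (bwalk_nn b) x_le_k) => j jm.
  exact: running_before nh (ltn_trans jm mn).
apply: le_trans (gap_le_Dtot m b) (le_trans _ KN); rewrite lerD2l.
apply: ler_wpM2r; first by rewrite invr_ge0 ltW.
apply: le_trans _ hD.
by rewrite /Dstop (tau_eq nh); apply: Dtot_mono => //; exact: ltnW.
Qed.

Lemma Eprefix_stuck_small (M : R) d : 0 < d -> gap_margin <= M ->
  exists n1, forall n, (n1 <= n)%N -> (gap_margin + M / c) * Eprefix n (stuck M n) <= d.
Proof.
move=> d0 KM; set A := gap_margin + M / c.
have K0 := gap_margin_ge0.
have A0 : 0 <= A by apply: addr_ge0 => //; apply: divr_ge0; [lra | exact: ltW].
pose N := Num.Def.archi_bound A.
have AN : A <= N%:R by apply: ltW; apply: archi_boundP.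
pose q := (2^-1 : R) ^+ N.
have q0 : 0 < q by rewrite exprn_gt0 // invr_gt0 ltr0n.
exists (Num.Def.archi_bound (4 * A / (q * d))).+1 => n hn.
have P0 : 0 <= Eprefix n (stuck M n) by apply: Eprefix_ge0 => b; rewrite ler0n.
have nq0 : 0 < n%:R * q by rewrite mulr_gt0 // ltr0n (leq_trans _ hn).
have lt_n : 4 * A < d * (n%:R * q).
  have ge0 : 0 <= 4 * A / (q * d) by rewrite divr_ge0 ?mulr_ge0 // ltW // mulr_gt0.
  have := archi_boundP ge0; rewrite ltr_pdivrMr ?mulr_gt0 // => /lt_le_trans; apply.
  have -> : d * (n%:R * q) = n%:R * (q * d) by ring.
  by apply: ler_wpM2r; [rewrite mulr_ge0 // ltW | rewrite ler_nat ltnW].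
rewrite -(ler_pM2r nq0); apply: ltW; apply: le_lt_trans lt_n.
rewrite -mulrA [4 * A]mulrC ler_wpM2l // mulrC.
exact: Eprefix_stuck_le.
Qed.

Lemma mean_gap_small eps : 0 < eps -> exists n, mean_gap n <= eps.
Proof.
move=> eps0; have ci0 : 0 <= 1 / c by rewrite divr_ge0 // ltW.
set d := eps / (3 + 2 / c).
have c2 : 0 <= 2 / c by rewrite divr_ge0 // ltW.
have den0 : 0 < 3 + 2 / c by lra.
have d0 : 0 < d by rewrite divr_gt0.
have kx0 : 0 <= ((k - x)%:~R : R) by rewrite -(mulr0z (1:R)) ler_int subr_ge0.
have [n0 close] := mean_D_settles d0.
pose M := gap_margin + n0%:R + n0%:R * (k - x)%:~R / d + 1.
have K0 := gap_margin_ge0; have n00 := ler0n R n0.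
have q1 : 0 <= n0%:R * (k - x)%:~R / d by apply: divr_ge0; [exact: mulr_ge0 | exact: ltW].
have M0 : 0 < M by rewrite /M; lra.
have KM : gap_margin <= M by rewrite /M; lra.
have n0M : n0%:R / M * (k - x)%:~R <= d.
  by rewrite mulrAC ler_pdivrMr // -ler_pdivrMl // mulrC /M; lra.
have [n1 stuck_small] := Eprefix_stuck_small d0 KM.
exists (maxn n0 n1).
have := Eprefix_Dstop_tail M0 close (leq_maxl n0 n1).
have := stuck_small _ (leq_maxr n0 n1).
have := ler_Eprefix (maxn n0 n1) (fun b => @gap_le_split M (maxn n0 n1) b KM).
rewrite EprefixD !EprefixZ -/(mean_gap _).
set S := Eprefix _ (stuck _ _); set T := Eprefix _ (fun b => _ * _).
move=> split stuck_le tail_le.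
have : (1 + 1 / c) * T <= (1 + 1 / c) * (d + d) by rewrite ler_wpM2l //; lra.
have : d * (3 + 2 / c) = eps by rewrite /d mulfVK // gt_eqF.
have : (1 + 1 / c) * (d + d) + d = d * (3 + 2 / c) by ring.
lra.
Qed.

Lemma mean_D_lim : limn (fun n => (mean_D n)%:E) = ((k - x)%:~R)%:E.
Proof.
have nd : {homo (fun n => (mean_D n)%:E) : n m / (n <= m)%N >-> (n <= m)%E}.
  by move=> n m nm; rewrite lee_fin mean_D_mono.
rewrite (cvg_lim _ (ereal_nondecreasing_cvgn nd)) //.
apply/le_anti/andP; split.
  by apply: ge_ereal_sup => _ [n _ <-]; rewrite lee_fin mean_D_le.
apply/lee_addgt0Pr => e e0; have [n hn] := mean_gap_small e0.
apply: (@le_trans _ _ ((mean_D n)%:E + e%:E)%E).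
  by rewrite -EFinD lee_fin; have := mean_D_gap n; lra.
by rewrite leeD2r //; apply: ereal_sup_ubound; exists n.
Qed.

End Liminf.

End Stopping.

End PrefixExpectation.

Section ProbabilityLink.
Variables (d : measure_display) (T : measurableType d) (R : realType).
Variables (P : probability T R) (U : nat -> T -> R) (omega : int -> nat -> R).
Hypothesis omega_plus : in_Omega_plus omega.
Hypothesis U_iid : iid_uniform P U.
Variable x : int.

Notation up_prob := (up_prob omega x).

Definition path_bits (t : T) : nat -> bool := step_bits omega x (fun m => U m t).

Definition prefix_event n b : set T := [set t | agree_prefix n b (path_bits t)].

Definition step_set b i : set R :=
  if b i then `]-oo, up_prob i b[%classic else `[up_prob i b, +oo[%classic.

Lemma measurable_step_set b i : measurable (step_set b i).
Proof. by rewrite /step_set; case: (b i); exact: measurable_itv. Qed.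

Lemma step_setE b i y : step_set b i y <-> (y < up_prob i b) = b i.
Proof.
rewrite /step_set; case: (b i) => /=; rewrite in_itv /= ?andbT.
  by split => [->|->].
by rewrite leNgt; split => [/negbTE ->|/negbT].
Qed.

Lemma step_bits_prefixE (u : nat -> R) n b :
  (forall m, (m < n)%N -> step_bits omega x u m = b m) <->
  (forall m, (m < n)%N -> (u m < up_prob m b) = b m).
Proof.
elim: n => [|n IH]; first by split.
have last_step : (forall m, (m < n)%N -> step_bits omega x u m = b m) ->
    step_bits omega x u n = (u n < up_prob n b).
  move=> H; rewrite /step_bits /up_prob (walk_hist_step_bits omega_plus).
  by rewrite (walk_hist_bits_prefix omega_plus x H).
split => H m; rewrite ltnS leq_eqVlt => /orP[/eqP ->|mn].
- by rewrite -last_step ?H // => j jn; apply: H; exact: ltnW.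
- by apply: (proj1 IH) => // j jn; apply: H; exact: ltnW.
- have Hn : forall j, (j < n)%N -> step_bits omega x u j = b j.
    by apply/IH => j jn; apply: H; exact: ltnW.
  by rewrite last_step ?H.
- by apply: (proj2 IH) => // j jn; apply: H; exact: ltnW.
Qed.

Lemma prefix_event_bigcap n b :
  prefix_event n b = \bigcap_(i in [set` iota 0 n]) (U i @^-1` step_set b i).
Proof.
apply/seteqP; split => t /=.
  move=> /agree_prefixP H i; rewrite /= mem_iota add0n => /andP[_ i_n]; apply/step_setE.
  by apply: (proj1 (step_bits_prefixE (fun m => U m t) n b)) => // m mn; rewrite H.
move=> H; apply/agree_prefixP => m mn; symmetry.
apply: (proj2 (step_bits_prefixE (fun m => U m t) n b)) => // j jn.
by apply/step_setE; apply: H; rewrite /= mem_iota add0n jn.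
Qed.

Lemma measurable_U_preimage i (B : set R) : measurable B -> measurable (U i @^-1` B).
Proof.
move=> mB; case: U_iid => mU _ _.
by have := mU i measurableT B mB; rewrite setTI.
Qed.

Lemma measurable_prefix_event n b : measurable (prefix_event n b).
Proof.
rewrite prefix_event_bigcap; case: n => [|n].
  rewrite (_ : \bigcap_(i in _) _ = setT); first exact: measurableT.
  by apply/seteqP; split => // t _ i.
apply: bigcap_measurable; first by exists 0%N; rewrite /= inE.
by move=> i _; apply: measurable_U_preimage; apply: measurable_step_set.
Qed.

Lemma prob_U_le a i : 0 <= a <= 1 -> P (U i @^-1` [set y | y <= a]) = a%:E.
Proof. by case: U_iid => _ H _ /H ->. Qed.

(* [P (U < a) = a] follows from [P (U <= a - e) = a - e] for all small [e > 0]. *)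
Lemma prob_U_lt a i : 0 <= a <= 1 -> P (U i @^-1` `]-oo, a[%classic) = a%:E.
Proof.
move=> /andP[a0 a1].
have mle e : measurable (U i @^-1` [set y | y <= e]).
  apply: measurable_U_preimage.
  rewrite (_ : [set y : R | y <= e] = `]-oo, e]%classic); first exact: measurable_itv.
  by apply/seteqP; split => y /=; rewrite in_itv.
have mlt : measurable (U i @^-1` `]-oo, a[%classic).
  by apply: measurable_U_preimage; exact: measurable_itv.
have up : (P (U i @^-1` `]-oo, a[%classic) <= a%:E)%E.
  rewrite -(prob_U_le i (a := a)) ?a0 ?a1 //; apply: le_measure; rewrite ?inE //.
  by move=> t /=; rewrite in_itv /= => /ltW.
have lo e : 0 < e -> e <= a -> ((a - e)%:E <= P (U i @^-1` `]-oo, a[%classic))%E.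
  move=> e0 ea; rewrite -(prob_U_le i (a := a - e)); last by apply/andP; split; lra.
  apply: le_measure; rewrite ?inE //.
  by move=> t /=; rewrite in_itv /= => h; lra.
have p0 : (0 <= P (U i @^-1` `]-oo, a[%classic))%E by apply: measure_ge0.
move: up lo p0; case: (P _) => [r| |] //= up lo p0.
have r0 : 0 <= r by rewrite -lee_fin.
rewrite lee_fin in up; congr (_%:E); apply/eqP; rewrite eq_le up /=.
apply/ler_addgt0Pr => e e0; case: (leP e a) => ea; last lra.
by have := lo e e0 ea; rewrite lee_fin; lra.
Qed.

Lemma prob_U_ge a i : 0 <= a <= 1 -> P (U i @^-1` `[a, +oo[%classic) = (1 - a)%:E.
Proof.
move=> ha.
rewrite (_ : U i @^-1` _ = ~` (U i @^-1` `]-oo, a[%classic)); last first.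
  apply/seteqP; split => t /=; rewrite !in_itv /= ?andbT.
    by move=> h1 h2; move: h1; rewrite leNgt h2.
  by move/negP; rewrite -leNgt.
rewrite probability_setC; last by apply: measurable_U_preimage; exact: measurable_itv.
by rewrite prob_U_lt // EFinB.
Qed.

Lemma prob_step_set b i : P (U i @^-1` step_set b i) = (step_weight omega x i b (b i))%:E.
Proof.
have /andP[h1 h2] := up_prob_range omega_plus x i b.
have ha : 0 <= up_prob i b <= 1.
  by apply/andP; split => //; apply: le_trans h1; rewrite invr_ge0 ler0n.
by rewrite /step_set /step_weight; case: (b i); [exact: prob_U_lt | exact: prob_U_ge].
Qed.

Lemma prob_prefix_event n b : P (prefix_event n b) = (prefix_weight omega x n b)%:E.
Proof.
rewrite prefix_event_bigcap; case: U_iid => _ _ indep.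
rewrite indep ?iota_uniq //; last by move=> i; apply: measurable_step_set.
rewrite (eq_bigr (fun i => (step_weight omega x i b (b i))%:E)); last first.
  by move=> i _; apply: prob_step_set.
by rewrite prodEFin /prefix_weight /index_iota subn0.
Qed.

Lemma measurable_prefix_sum n (G : (nat -> bool) -> T -> R) :
  (forall b, measurable_fun setT (G b)) ->
  measurable_fun setT (fun t => prefix_sum n (fun b => G b t)).
Proof.
elim: n G => [|n IH] G HG /=; first exact: HG.
apply: (IH (fun b t => G (set_bit b n true) t + G (set_bit b n false) t)) => b.
exact: measurable_realfun.measurable_funD.
Qed.

Lemma integral_prefix_sum n (G : (nat -> bool) -> T -> R) (g : (nat -> bool) -> R) :
  (forall b, measurable_fun setT (G b)) -> (forall b t, 0 <= G b t) ->
  (forall b, (\int[P]_t (G b t)%:E)%E = (g b)%:E) ->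
  (\int[P]_t (prefix_sum n (fun b => G b t))%:E)%E = (prefix_sum n g)%:E.
Proof.
elim: n G g => [|n IH] G g mG G0 intG /=; first exact: intG.
apply: IH => [b|b t|b]; first exact: measurable_realfun.measurable_funD.
  exact: addr_ge0.
under eq_integral do rewrite EFinD.
rewrite ge0_integralD //; last 4 first.
- by move=> t _; rewrite lee_fin.
- exact/measurable_realfun.measurable_EFinP.
- by move=> t _; rewrite lee_fin.
- exact/measurable_realfun.measurable_EFinP.
by rewrite !intG EFinD.
Qed.

Lemma prefix_sum_events n (F : (nat -> bool) -> R) t : reads_prefix n F ->
  F (path_bits t) = prefix_sum n (fun b => F b * \1_(prefix_event n b) t).
Proof.
move=> HF; rewrite -(prefix_sum_indicator (path_bits t) HF).
apply: eq_prefix_sum => b; rewrite indicE; congr (_ * _%:R).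
have e : (t \in prefix_event n b) = agree_prefix n b (path_bits t).
  by apply/idP/idP => [/set_mem //|h]; apply: mem_set.
by rewrite e.
Qed.

Lemma measurable_prefix_indicator n (F : (nat -> bool) -> R) b :
  measurable_fun setT (fun t => F b * \1_(prefix_event n b) t).
Proof.
apply: measurable_realfun.measurable_funM; first exact: measurable_cst.
by apply: measurable_realfun.measurable_indic; exact: measurable_prefix_event.
Qed.

Lemma measurable_prefix_functional n (F : (nat -> bool) -> R) : reads_prefix n F ->
  measurable_fun setT (fun t => F (path_bits t)).
Proof.
move=> HF; rewrite (funext (fun t => @prefix_sum_events n F t HF)); apply: measurable_prefix_sum => b.
exact: measurable_prefix_indicator.
Qed.

Lemma integral_prefix_functional n (F : (nat -> bool) -> R) :
  reads_prefix n F -> (forall b, 0 <= F b) ->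
  (\int[P]_t (F (path_bits t))%:E)%E = (Eprefix omega x n F)%:E.
Proof.
move=> HF F0; under eq_integral do rewrite (@prefix_sum_events n F _ HF).
rewrite (@integral_prefix_sum n _ (fun b => F b * prefix_weight omega x n b)).
- by congr (_%:E); apply: eq_prefix_sum => b; rewrite mulrC.
- by move=> b; apply: measurable_prefix_indicator.
- by move=> b t; rewrite mulr_ge0 // /indic ler0n.
move=> b; under eq_integral do rewrite EFinM.
rewrite ge0_integralZl_EFin //; last first.
  apply/measurable_realfun.measurable_EFinP; apply: measurable_realfun.measurable_indic.
  exact: measurable_prefix_event.
rewrite integral_indic //; last exact: measurable_prefix_event.
by rewrite setIT EFinM; congr (_ * _)%E; exact: prob_prefix_event.
Qed.

End ProbabilityLink.

Lemma liminf_gt0_linear_lower (R : realType) (f : nat -> R) :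
  (0 < limn_einf (fun i : nat => (i%:R^-1 * f i)%:E))%E ->
  exists c, 0 < c /\ exists I, forall i, (I <= i)%N -> c * i%:R <= f i.
Proof.
set u := fun i : nat => (i%:R^-1 * f i)%:E.
rewrite limn_einf_lim (cvg_lim _ (@cvg_einfs_sup _ u)) // => H.
have [y [n _ <-] hy] := ereal_sup_gt H.
have lb i : (n <= i)%N -> (einfs u n <= u i)%E.
  by move=> ni; apply: ereal_inf_lbound; exists i.
move: hy lb; case: (einfs u n) => [r| |] //= hy lb; last first.
  by exists 1; split => //; exists n => i ni; have := lb i ni; rewrite /u leye_eq.
rewrite lte_fin in hy; exists (r / 2); split; first by rewrite divr_gt0.
exists (maxn n 1) => i; rewrite geq_max => /andP[ni i1].
have i0 : (0 : R) < i%:R by rewrite ltr0n.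
have := lb i ni; rewrite /u lee_fin ler_pdivlMl // => h.
have : r / 2 * i%:R <= r * i%:R by rewrite ler_pM2r // ler_pdivrMr //; lra.
lra.
Qed.

Lemma D_at_hit_lim (R : realType) (omega : int -> nat -> R) (X : nat -> int) (k : int) :
  in_Omega_plus omega ->
  D_at_hit omega X k = limn (fun n => (Dtot omega X (hit_trunc X k n))%:E).
Proof.
move=> omega_plus.
have nd : {homo (fun n => (Dtot omega X (hit_trunc X k n))%:E) : n m / (n <= m)%N >-> (n <= m)%E}.
  by move=> n m nm; rewrite lee_fin; apply: (Dtot_mono omega_plus); apply: hit_trunc_mono.
rewrite (cvg_lim _ (ereal_nondecreasing_cvgn nd)) // /D_at_hit /hitting.
case: pselect => [h|h]; last first.
  suff -> : (fun n => (Dtot omega X (hit_trunc X k n))%:E) = (fun n => (Dtot omega X n)%:E).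
    by [].
  apply: funext => n; rewrite hit_trunc_full // => m _.
  by apply/negP => /eqP Xm; apply: h; exists m; exact/eqP.
case: ex_minnP => m /eqP Xm mmin.
have bef j : (j < m)%N -> X j != k.
  by move=> jm; apply/negP => /mmin; rewrite leqNgt jm.
apply/le_anti/andP; split.
  by apply: ereal_sup_ubound; exists m => //; rewrite (hit_trunc_first _ Xm bef) minnn.
apply: ge_ereal_sup => _ [n _ <-].
by rewrite lee_fin (hit_trunc_first _ Xm bef); apply: (Dtot_mono omega_plus); exact: geq_minl.
Qed.

Section HittingExpectation.
Variables (d : measure_display) (T : measurableType d) (R : realType).
Variables (P : probability T R) (U : nat -> T -> R) (omega : int -> nat -> R).
Hypothesis omega_plus : in_Omega_plus omega.
Variables (x k : int).

Lemma D_at_hit_path t : D_at_hit omega (walk omega x (fun n => U n t)) k =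
  limn (fun n => (Dstop omega x k n (path_bits U omega x t))%:E).
Proof. by rewrite (walk_step_bits omega_plus) (D_at_hit_lim _ _ omega_plus). Qed.

Hypothesis U_iid : iid_uniform P U.

Lemma integral_Dstop n :
  (\int[P]_t (Dstop omega x k n (path_bits U omega x t))%:E)%E = (mean_D omega x k n)%:E.
Proof.
apply: (integral_prefix_functional omega_plus U_iid x (Dstop_reads omega_plus x k (n := n))).
exact: Dstop_ge0.
Qed.

End HittingExpectation.

Unset Implicit Arguments.

Theorem mainTheorem2 (d : measure_display) (T : measurableType d) (R : realType)
  (P : probability T R) (U : nat -> T -> R) (omega : int -> nat -> R) :
  in_Omega_plus omega ->
  iid_uniform P U ->
  (0 < limn_einf (fun i : nat =>
      (i%:R^-1 * \sum_(0 <= j < i.+1) (2 * omega (- (j%:Z)) 1%N - 1))%:E))%E ->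
  forall x k : int, x <= k ->
  (\int[P]_t D_at_hit omega (walk omega x (fun n => U n t)) k)%E = ((k - x)%:~R)%:E.
Proof.
move=> omega_plus U_iid first_cookies_pos x k x_le_k.
have [c [c_gt0 [I first_cookies_ge]]] := liminf_gt0_linear_lower first_cookies_pos.
under eq_integral do rewrite (D_at_hit_path U omega_plus x k).
rewrite (@monotone_convergence _ _ _ P setT measurableT); last 3 first.
- move=> n; apply/measurable_realfun.measurable_EFinP.
  exact: (measurable_prefix_functional omega_plus U_iid x (Dstop_reads omega_plus x k (n := n))).
- by move=> n t _; rewrite lee_fin Dstop_ge0.
- by move=> t _ n m nm; rewrite lee_fin Dstop_mono.
under eq_fun do rewrite (integral_Dstop omega_plus x k U_iid).
apply: (mean_D_lim omega_plus x_le_k c_gt0 (I := I)) => i iI.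
exact: first_cookies_ge.
Qed.
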